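(* Let $C_N$ be the undirected cycle on $N$ vertices, $r>0$ and $\delta\in[0,1]$, and consider the mixed $\delta$-updating process starting with a single mutant. Define $F_k:=rk+(N-k)$ and $$\gamma_k=\begin{cases}\dfrac{(1-\delta)/F_k+\delta/N}{(1-\delta)r/F_k+2r\delta/((1+r)N)}&\text{if }k=1,\\[8pt]\dfrac{(1-\delta)/F_k+2\delta/((1+r)N)}{(1-\delta)r/F_k+\delta/N}&\text{if }k=N-1,\\[8pt]\dfrac{(1-\delta)/F_k+2\delta/((1+r)N)}{(1-\delta)r/F_k+2r\delta/((1+r)N)}&\text{otherwise}.\end{cases}$$ Then $$\mathsf{fp}_r^\delta(C_N)=\frac{1}{1+\sum_{j=1}^{N-1}\prod_{k=1}^{j}\gamma_k}.$$
   Context: Mixed $\delta$-updating on an undirected unweighted graph $G=(V,E)$ with $N$ vertices: each vertex holds a mutant (fitness $r$) or wild-type (fitness $1$); $f_S(u)$ is the fitness at $u$ when $S$ is the mutant set. At each step, with probability $\delta$ a death-Birth step: choose $v$ uniformly to die, choose a neighbor $u$ of $v$ with probability proportional to $f_S(u)$, $u$ copies its type onto $v$; with probability $1-\delta$ a Birth-death step: choose $u$ with probability proportional to $f_S(u)$ among all vertices, choose a uniformly random neighbor $v$ of $u$, $u$ copies its type onto $v$. $\mathsf{fp}_r^\delta(G)=\frac1N\sum_{u\in V}\mathsf{fp}_r^\delta(G,\{u\})$, where $\mathsf{fp}_r^\delta(G,S_0)$ is the probability all vertices eventually become mutant from mutant set $S_0$ (on the cycle this is the same for every single starting vertex). *)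

From HB Require Import structures.
From mathcomp Require Import all_boot all_order all_algebra.
From mathcomp Require Import all_classical all_reals all_analysis.
Set Implicit Arguments. Unset Strict Implicit. Unset Printing Implicit Defensive.
Import Order.TTheory GRing.Theory Num.Theory.
Import numFieldNormedType.Exports.
Local Open Scope classical_set_scope.
Local Open Scope ring_scope.

Section Process.
Variables (R : realType) (V : finType) (adj : rel V).
Variables (r delta : R).

Definition fitness (S : {set V}) (u : V) : R := if u \in S then r else 1.

Definition degree (u : V) : R := #|[set v | adj u v]|%:R.

Definition copy_type (S : {set V}) (u v : V) : {set V} :=
  if u \in S then v |: S else S :\ v.

Definition pair_prob (S : {set V}) (u v : V) : R :=
  delta * (1 / #|V|%:R) *
    (fitness S u / \sum_(w | adj v w) fitness S w)
  + (1 - delta) * (fitness S u / \sum_(w : V) fitness S w) * (1 / degree u).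

Definition step_prob (S S' : {set V}) : R :=
  \sum_(u : V) \sum_(v : V | adj u v && (copy_type S u v == S')) pair_prob S u v.

Fixpoint tstep_prob (t : nat) (S S' : {set V}) : R :=
  match t with
  | 0%N => (S == S')%:R
  | t'.+1 => \sum_(S'' : {set V}) step_prob S S'' * tstep_prob t' S'' S'
  end.

(* fixation probability from S0: probability of eventually reaching the
   all-mutant (absorbing) state = limit of the probability of being in it
   at time t *)
Definition fix_prob (S0 : {set V}) : R :=
  lim ((fun t : nat => tstep_prob t S0 [set: V]) @ \oo).

Definition fix_prob_avg : R :=
  (1 / #|V|%:R) * \sum_(u : V) fix_prob [set u].
End Process.

Definition cycle_adj (N : nat) : rel 'I_N :=
  fun u v => ((v : nat) == (u.+1 %% N)%N) || ((u : nat) == (v.+1 %% N)%N).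

Definition F_k (R : realType) (N : nat) (r : R) (k : nat) : R :=
  r * k%:R + (N - k)%:R.

Definition gamma_k (R : realType) (N : nat) (r delta : R) (k : nat) : R :=
  let F := F_k N r k in
  if k == 1%N then
    ((1 - delta) / F + delta / N%:R) /
    ((1 - delta) * r / F + 2 * r * delta / ((1 + r) * N%:R))
  else if k == N.-1 then
    ((1 - delta) / F + 2 * delta / ((1 + r) * N%:R)) /
    ((1 - delta) * r / F + delta / N%:R)
  else
    ((1 - delta) / F + 2 * delta / ((1 + r) * N%:R)) /
    ((1 - delta) * r / F + 2 * r * delta / ((1 + r) * N%:R)).

(** Starting from a single mutant on the cycle C_N, the mutant set is always an
    arc, and by rotation invariance the probability x_k of absorption from an
    arc of k mutants depends only on k.  An arc of length 0 < k < N grows at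
    each of its two ends with the same probability p_k and shrinks at each end
    with the same probability q_k, while every other step leaves it unchanged.
    Hence x is harmonic for a birth-death chain,
    p_k (x_(k+1) - x_k) = q_k (x_k - x_(k-1)), x_0 = 0, x_N = 1,
    and telescoping gives x_1 = 1 / (1 + sum_j prod_(k <= j) q_k / p_k), with
    q_k / p_k = gamma_k.  The recurrence is first proved for the probabilities
    of absorption within t steps, which increase to the fixation probability. *)

From HB Require Import structures.
From mathcomp Require Import all_boot all_order all_algebra.
From mathcomp Require Import all_classical all_reals all_analysis.
From mathcomp Require Import ring lra zify.
Set Implicit Arguments. Unset Strict Implicit. Unset Printing Implicit Defensive.
Import Order.TTheory GRing.Theory Num.Theory.
Import numFieldNormedType.Exports.
Local Open Scope ring_scope.

(** * Birth-death chains *)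

Lemma birth_death_hitting (F : fieldType) (N : nat) (x p q : nat -> F) :
  x 0%N = 0 -> x N = 1 -> (forall k, (0 < k < N)%N -> p k != 0) ->
  (forall k, (0 < k < N)%N -> p k * (x k.+1 - x k) = q k * (x k - x k.-1)) ->
  x 1%N = 1 / (1 + \sum_(1 <= j < N) \prod_(1 <= k < j.+1) (q k / p k)).
Proof.
move=> x0 xN p_neq0 balance.
have increment j : (j < N)%N ->
    x j.+1 - x j = (\prod_(1 <= k < j.+1) (q k / p k)) * x 1%N.
  elim: j => [|j IHj] jN; first by rewrite x0 subr0 big_geq ?mul1r.
  have j1N : (0 < j.+1 < N)%N by rewrite ltn0Sn.
  have /= := balance _ j1N => bal.
  rewrite big_nat_recr //= mulrAC -IHj ?(ltn_trans _ jN) //.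
  by rewrite -[LHS](mulKf (p_neq0 _ j1N)) bal; ring.
have N_gt0 : (0 < N)%N.
  by rewrite lt0n; apply: contra_eqN xN => /eqP->; rewrite x0 eq_sym oner_eq0.
have : \sum_(0 <= j < N) (\prod_(1 <= k < j.+1) (q k / p k)) * x 1%N = 1.
  by rewrite (telescope_sumr_eq x) ?xN ?x0 ?subr0 // => j /andP[_ /increment].
rewrite -big_distrl /= big_ltn // [\prod_(1 <= k < 1) _]big_geq //.
by move=> /mulr1_eq <-; rewrite div1r.
Qed.

(** * The mixed updating chain on a graph *)

Section MixedUpdating.
Variables (R : realType) (V : finType) (adj : rel V) (r delta : R).
Local Notation P := (pair_prob adj r delta).
Local Notation absorb t S := (tstep_prob adj r delta t S [set: V]).

Lemma step_prob_sum_mul S (H : {set V} -> R) :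
  \sum_S' step_prob adj r delta S S' * H S' =
  \sum_u \sum_(v | adj u v) P S u v * H (copy_type S u v).
Proof.
rewrite /step_prob.
under eq_bigr => S' _ do rewrite big_distrl /=.
rewrite exchange_big /=; apply: eq_bigr => u _.
under eq_bigr => S' _ do rewrite big_distrl /=.
rewrite (exchange_big_dep (adj u)) /=; last by move=> ? ? _ /andP[].
apply: eq_bigr => v uv.
rewrite (eq_bigl (pred1 (copy_type S u v))); first by rewrite big_pred1_eq.
by move=> S'; rewrite /= uv eq_sym.
Qed.

Lemma tstep_probS t S T :
  tstep_prob adj r delta t.+1 S T =
  \sum_u \sum_(v | adj u v) P S u v * tstep_prob adj r delta t (copy_type S u v) T.
Proof. exact: step_prob_sum_mul. Qed.

Lemma copy_type_id (S : {set V}) u v : (u \in S) = (v \in S) -> copy_type S u v = S.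
Proof.
rewrite /copy_type; case: ifP => uS vS; apply/setP => x.
  by rewrite in_setU1; case: eqVneq => // ->; rewrite -vS.
by rewrite in_setD1; case: eqVneq => //= ->; rewrite -vS.
Qed.

Hypothesis r_gt0 : 0 < r.
Hypothesis delta_ge0 : 0 <= delta.
Hypothesis delta_le1 : delta <= 1.
Hypothesis adj_sym : symmetric adj.
Hypothesis adj_nonisolated : forall u, exists v, adj u v.

Lemma fitness_gt0 (S : {set V}) u : 0 < fitness r S u.
Proof. by rewrite /fitness; case: ifP. Qed.

Lemma sum_fitness_gt0 (S : {set V}) (A : pred V) :
  (exists u, A u) -> 0 < \sum_(w | A w) fitness r S w.
Proof.
case=> u Au; rewrite (bigD1 u) //= ltr_wpDr ?fitness_gt0 //.
by apply: sumr_ge0 => w _; exact/ltW/fitness_gt0.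
Qed.

Lemma degree_gt0 u : 0 < degree R adj u.
Proof.
have [v uv] := adj_nonisolated u.
by rewrite ltr0n; apply/card_gt0P; exists v; rewrite inE.
Qed.

Lemma pair_prob_ge0 S u v : 0 <= P S u v.
Proof.
have [w _] := adj_nonisolated u.
have fit_u := fitness_gt0 S u.
have sum_v := sum_fitness_gt0 S (adj_nonisolated v).
have sum_all : 0 < \sum_w fitness r S w by apply: sum_fitness_gt0; exists w.
have deg_u := degree_gt0 u.
rewrite /pair_prob addr_ge0 // !mulr_ge0 ?divr_ge0 ?subr_ge0 ?ler0n //.
all: by rewrite ?invr_ge0 ltW.
Qed.

Variable v0 : V.

Lemma sum_pair_prob S : \sum_u \sum_(v | adj u v) P S u v = 1.
Proof.
have N_neq0 : (#|V|%:R : R) != 0 by rewrite pnatr_eq0 (cardD1 v0).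
have sum_all : 0 < \sum_w fitness r S w by apply: sum_fitness_gt0; exists v0.
have death_birth v :
    \sum_(u | adj u v) fitness r S u / \sum_(w | adj v w) fitness r S w = 1.
  rewrite -big_distrl /= (eq_bigl (adj v)) => [|u]; last by rewrite /= adj_sym.
  by rewrite mulfV // lt0r_neq0 // sum_fitness_gt0.
have birth_death u (a : R) : \sum_(v | adj u v) a * (1 / degree R adj u) = a.
  have card_adj : #|adj u|%:R = degree R adj u.
    by congr _%:R; apply: eq_card => v; apply/idP/idP; rewrite in_setE.
  by rewrite sumr_const -mulr_natr card_adj div1r mulfVK // lt0r_neq0 ?degree_gt0.
rewrite /pair_prob; under eq_bigr => u _ do rewrite big_split /=.
rewrite big_split /=.
under eq_bigr => u _ do rewrite -big_distrr /=.
rewrite -big_distrr /= (exchange_big_dep predT) //=.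
under eq_bigr => v _ do rewrite death_birth.
rewrite sumr_const div1r mulfVK //.
under eq_bigr => u _ do rewrite birth_death.
rewrite -big_distrr -big_distrl /= mulfV ?lt0r_neq0 //.
by rewrite mulr1 addrC subrK.
Qed.

Lemma absorb_prob_ge0 t S : 0 <= absorb t S.
Proof.
elim: t S => [|t IHt] S /=; first exact: ler0n.
rewrite step_prob_sum_mul; do 2!apply: sumr_ge0 => ? _.
by rewrite mulr_ge0 ?pair_prob_ge0.
Qed.

Lemma absorb_prob_le1 t S : absorb t S <= 1.
Proof.
elim: t S => [|t IHt] S /=; first by case: (S == _).
rewrite step_prob_sum_mul -(sum_pair_prob S); do 2!apply: ler_sum => ? _.
by rewrite ler_piMr ?pair_prob_ge0.
Qed.

Lemma absorb_probT t : absorb t [set: V] = 1.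
Proof.
elim: t => [|t IHt] /=; first by rewrite eqxx.
rewrite step_prob_sum_mul -[RHS](sum_pair_prob [set: V]); do 2!apply: eq_bigr => ? _.
by rewrite copy_type_id ?inE // IHt mulr1.
Qed.

Lemma absorb_prob0 t : absorb t finset.set0 = 0.
Proof.
elim: t => [|t IHt] /=.
  by case: eqP => // /setP /(_ v0); rewrite !inE.
rewrite step_prob_sum_mul; do 2!apply: big1 => ? _.
by rewrite copy_type_id ?inE // IHt mulr0.
Qed.

Lemma absorb_prob_nondecreasing t S : absorb t S <= absorb t.+1 S.
Proof.
elim: t S => [|t IHt] S.
  case: (eqVneq S [set: V]) => [->|SnT]; first by rewrite !absorb_probT.
  by rewrite [X in X <= _]/= (negbTE SnT) absorb_prob_ge0.
rewrite !tstep_probS; do 2!apply: ler_sum => ? _.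
by rewrite ler_wpM2l ?pair_prob_ge0.
Qed.

Lemma absorb_prob_cvg S : (absorb t S @[t --> \oo] --> fix_prob adj r delta S)%classic.
Proof.
apply: cvgP; apply: nondecreasing_cvgn.
  by apply/nondecreasing_seqP => t; exact: absorb_prob_nondecreasing.
by exists 1 => _ [t _ <-]; exact: absorb_prob_le1.
Qed.

End MixedUpdating.

Lemma F_k_gt0 (R : realType) (N k : nat) (r : R) :
  0 < r -> (0 < N)%N -> (k <= N)%N -> 0 < F_k N r k.
Proof.
move=> r_gt0 N_gt0; rewrite /F_k; case: k => [|k] k_le.
  by rewrite mulr0n mulr0 add0r subn0 ltr0n.
by rewrite ltr_wpDr ?ler0n // mulr_gt0 ?ltr0n.
Qed.

(** * The cycle *)

Section Cycle.
Variable n : nat.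
Local Notation N := n.+3.
Local Notation V := 'I_N.

Lemma cycle_adjE (u v : V) : cycle_adj u v = (v == u + 1) || (v == u - 1).
Proof.
rewrite /cycle_adj; congr (_ || _); first by rewrite -val_eqE /= modnDmr addn1.
by rewrite [RHS]eq_sym subr_eq -val_eqE /= modnDmr addn1.
Qed.

Lemma cycle_adj_sym : symmetric (@cycle_adj N).
Proof. by move=> u v; rewrite /cycle_adj orbC. Qed.

Lemma cycle_adj_nonisolated (u : V) : exists v, cycle_adj u v.
Proof. by exists (u + 1); rewrite cycle_adjE eqxx. Qed.

Lemma sum_cycle_adj (R : realType) (u : V) (G : V -> R) :
  \sum_(v | cycle_adj u v) G v = G (u + 1) + G (u - 1).
Proof.
have succ_neq_pred : u + 1 != u - 1.
  by rewrite (inj_eq (addrI u)) -val_eqE /= !modn_small.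
rewrite (bigD1 (u + 1)) ?cycle_adjE ?eqxx //= (big_pred1 (u - 1)) // => v.
rewrite /= cycle_adjE; case: (eqVneq v (u + 1)) => [->|_] /=.
  by rewrite (negbTE succ_neq_pred).
by rewrite andbT.
Qed.

Lemma degree_cycle (R : realType) (u : V) : degree R (@cycle_adj N) u = 2.
Proof.
rewrite -[RHS](sum_cycle_adj u (fun=> 1)) sumr_const; congr _%:R.
by apply: eq_card => v; apply/idP/idP; rewrite in_setE.
Qed.

Definition offset (a x : V) : nat := (x - a)%R.

Lemma offset_natr a j : offset a (a + j%:R) = (j %% N)%N.
Proof. by rewrite /offset addrAC subrr add0r (@val_Zp_nat N). Qed.

Lemma natr_offset a x : a + (offset a x)%:R = x.
Proof. by rewrite /offset natr_Zp addrC subrK. Qed.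

Lemma eq_offset a x y : (x == y) = (offset a x == offset a y).
Proof. by rewrite /offset val_eqE (inj_eq (addIr _)). Qed.

Lemma offset_lt a x : (offset a x < N)%N.
Proof. exact: ltn_ord. Qed.

Lemma offset_shift a b x : offset (a + b) x = offset a (x - b).
Proof. by rewrite /offset opprD addrA addrAC. Qed.

Lemma addr_natS (a : V) j : a + j%:R + 1 = a + j.+1%:R.
Proof. by rewrite -addrA -mulrSr. Qed.

Lemma addr_natS_sub1 (a : V) j : a + j.+1%:R - 1 = a + j%:R.
Proof. by rewrite -addr_natS addrK. Qed.

Lemma subr1_natr (a : V) : a - 1 = a + n.+2%:R.
Proof.
by congr (_ + _); apply/eqP; rewrite eq_sym -addr_eq0 -mulrSr (@pchar_Zp N).
Qed.

Definition arc (a : V) (k : nat) : {set V} := [set x | offset a x < k]%N.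

Lemma fitness_arc (R : realType) (r : R) a k x :
  fitness r (arc a k) x = if (offset a x < k)%N then r else 1.
Proof. by rewrite /fitness inE. Qed.

Lemma card_arc a k : (k <= N)%N -> #|arc a k| = k.
Proof.
move=> kN; have -> : arc a k = [set a + (val i)%:R | i : 'I_k].
  apply/setP => x; rewrite inE; apply/idP/imsetP => [xk|[i _ ->]].
    by exists (Ordinal xk); rewrite ?inE //= natr_offset.
  by rewrite offset_natr modn_small ?(leq_trans (ltn_ord i)).
rewrite card_imset ?card_ord // => i j /(congr1 (offset a)).
by rewrite !offset_natr !modn_small ?(leq_trans (ltn_ord _) kN) // => /val_inj.
Qed.

Lemma arc_eqT a k : (k <= N)%N -> (arc a k == [set: V]) = (k == N).
Proof.
by move=> kN; rewrite eqEcard finset.subsetT cardsT card_ord card_arc // eqn_leq kN.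
Qed.

Lemma arc0 a : arc a 0 = finset.set0.
Proof. by apply/setP => x; rewrite !inE. Qed.

Lemma arcN a : arc a N = [set: V].
Proof. by apply/setP => x; rewrite !inE ltn_ord. Qed.

Lemma arc1 a : arc a 1 = [set a].
Proof. by apply/setP => x; rewrite !inE ltnS leqn0 (eq_offset a x) /offset subrr. Qed.

Lemma offset_id a : offset a a = 0%N.
Proof. by rewrite /offset subrr. Qed.

Lemma offset_subr1_id a : offset a (a - 1) = N.-1.
Proof. by rewrite subr1_natr offset_natr modn_small. Qed.

Lemma offset_addr1 a x : (offset a x < N.-1)%N -> offset a (x + 1) = (offset a x).+1.
Proof. by move=> x_lt; rewrite -{1}(natr_offset a x) addr_natS offset_natr modn_small. Qed.

Lemma offset_subr1 a x : (0 < offset a x)%N -> offset a (x - 1) = (offset a x).-1.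
Proof.
move=> x_gt0; rewrite -{1}(natr_offset a x) -(prednK x_gt0) addr_natS_sub1 offset_natr.
by rewrite modn_small // (leq_ltn_trans (leq_pred _) (ltn_ord _)).
Qed.

Section ArcDynamics.
Variables (R : realType) (r delta : R).
Hypotheses (r_gt0 : 0 < r) (delta_ge0 : 0 <= delta) (delta_le1 : delta <= 1).
Local Notation P := (pair_prob (@cycle_adj N) r delta).
Local Notation fit S := (@fitness R V r S).

(* The probability that an arc of k mutants grows (resp. shrinks) at one given
   end in one step; by symmetry it is the same at both ends. *)
Definition grow_prob (k : nat) : R :=
  delta * (1 / N%:R) * (r / ((if k == N.-1 then r else 1) + r))
  + (1 - delta) * (r / F_k N r k) * (1 / 2).

Definition shrink_prob (k : nat) : R :=
  delta * (1 / N%:R) * (1 / ((if k == 1%N then 1 else r) + 1))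
  + (1 - delta) * (1 / F_k N r k) * (1 / 2).

Lemma sum_fitness_arc a k : (k <= N)%N -> \sum_x fit (arc a k) x = F_k N r k.
Proof.
move=> kN; rewrite (bigID (mem (arc a k))) /=.
under eq_bigr => x xa do rewrite /fitness xa.
under [X in _ + X]eq_bigr => x xa do rewrite /fitness (negbTE xa).
have card_out : #|[predC arc a k]| = (N - k)%N.
  have := cardC (arc a k); rewrite card_arc // card_ord => card_split.
  by apply/eqP; rewrite -(eqn_add2l k) subnKC // card_split.
by rewrite !sumr_const card_arc // card_out /F_k mulr_natr.
Qed.

Lemma pair_prob_arc a k u v : (k <= N)%N ->
  P (arc a k) u v =
  delta * (1 / N%:R) * (fit (arc a k) u / (fit (arc a k) (v + 1) + fit (arc a k) (v - 1)))
  + (1 - delta) * (fit (arc a k) u / F_k N r k) * (1 / 2).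
Proof.
by move=> kN; rewrite /pair_prob card_ord sum_cycle_adj sum_fitness_arc // degree_cycle.
Qed.

Section Boundary.
Variables (a : V) (m : nat).
Hypothesis m_lt : (m.+1 < N)%N.
Local Notation S := (arc a m.+1).

Lemma grow_right_prob : P S (a + m%:R) (a + m%:R + 1) = grow_prob m.+1.
Proof.
rewrite pair_prob_arc 1?ltnW // addr_natS addr_natS addr_natS_sub1 !fitness_arc.
rewrite !offset_natr !(modn_small (ltnW m_lt)) ltnSn /grow_prob; congr (_ * (_ / (_ + _)) + _).
case: (eqVneq m.+1 N.-1) => [/= ->|ne]; first by rewrite modnn.
rewrite modn_small; last by move: ne; lia.
by rewrite ltnNge leqW.
Qed.

Lemma grow_left_prob : P S a (a - 1) = grow_prob m.+1.
Proof.
rewrite pair_prob_arc 1?ltnW // subrK (subr1_natr a) addr_natS_sub1 !fitness_arc.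
rewrite offset_id offset_natr modn_small //= [r + _]addrC /grow_prob.
congr (_ * (_ / (_ + _)) + _); congr (if _ then _ else _).
by apply/idP/eqP => /=; lia.
Qed.

Lemma shrink_left_prob : P S (a - 1) (a - 1 + 1) = shrink_prob m.+1.
Proof.
rewrite pair_prob_arc 1?ltnW // subrK !fitness_arc offset_addr1 offset_id //.
rewrite offset_subr1_id (_ : (N.-1 < m.+1)%N = false); last by apply/negbTE; rewrite -leqNgt.
by case: m m_lt.
Qed.

Lemma shrink_right_prob : P S (a + m.+1%:R) (a + m.+1%:R - 1) = shrink_prob m.+1.
Proof.
rewrite pair_prob_arc 1?ltnW // addr_natS_sub1 addr_natS !fitness_arc !offset_natr.
rewrite !modn_small ?ltnn // ?(ltn_trans _ m_lt) //.
case: m m_lt => [|k] k_lt; first by rewrite addr0 offset_subr1_id.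
rewrite addr_natS_sub1 offset_natr modn_small; last by lia.
by rewrite ltnS leqnSn [1 + r]addrC.
Qed.

Lemma grow_right_copy : copy_type S (a + m%:R) (a + m%:R + 1) = arc a m.+2.
Proof.
rewrite /copy_type inE offset_natr modn_small ?(ltnW m_lt) // ltnSn addr_natS.
apply/setP => x; rewrite !inE (eq_offset a) offset_natr modn_small //.
by rewrite -leq_eqVlt.
Qed.

Lemma grow_left_copy : copy_type S a (a - 1) = arc (a - 1) m.+2.
Proof.
rewrite /copy_type inE offset_id /=; apply/setP => x; rewrite !inE offset_shift opprK.
case: (eqVneq x (a - 1)) => [->|]; first by rewrite subrK offset_id.
rewrite (eq_offset a) offset_subr1_id /= => x_neq.
by rewrite offset_addr1 ?ltnS //; have := offset_lt a x; lia.
Qed.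

Lemma shrink_left_copy : copy_type S (a - 1) (a - 1 + 1) = arc (a + 1) m.
Proof.
rewrite /copy_type inE offset_subr1_id ltnNge -ltnS m_lt /= subrK.
apply/setP => x; rewrite !inE offset_shift.
case: (eqVneq x a) => [->|] /=; first by rewrite offset_subr1_id; lia.
rewrite (eq_offset a) offset_id => x_neq.
by rewrite offset_subr1 ?lt0n //; lia.
Qed.

Lemma shrink_right_copy : copy_type S (a + m.+1%:R) (a + m.+1%:R - 1) = arc a m.
Proof.
rewrite /copy_type inE offset_natr modn_small // ltnn addr_natS_sub1.
apply/setP => x; rewrite !inE (eq_offset a) offset_natr modn_small ?(ltnW m_lt) //.
by apply/idP/idP; lia.
Qed.

Lemma sum_succ_moves (H : {set V} -> R) :
  \sum_u P S u (u + 1) * (H (copy_type S u (u + 1)) - H S) =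
  grow_prob m.+1 * (H (arc a m.+2) - H S) + shrink_prob m.+1 * (H (arc (a + 1) m) - H S).
Proof.
have m_small : (m %% N)%N = m by rewrite modn_small ?(ltnW m_lt).
rewrite (bigD1 (a + m%:R)) // (bigD1 (a - 1)) /=; last first.
  by rewrite (eq_offset a) offset_subr1_id offset_natr m_small; lia.
rewrite grow_right_prob grow_right_copy shrink_left_prob shrink_left_copy.
rewrite big1 ?addr0 // => u /andP[].
rewrite !(eq_offset a) offset_subr1_id offset_natr m_small => u_neq1 u_neq2.
rewrite copy_type_id ?subrr ?mulr0 // !inE offset_addr1; last by have := offset_lt a u; lia.
by apply/idP/idP; lia.
Qed.

Lemma sum_pred_moves (H : {set V} -> R) :
  \sum_u P S u (u - 1) * (H (copy_type S u (u - 1)) - H S) =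
  shrink_prob m.+1 * (H (arc a m) - H S) + grow_prob m.+1 * (H (arc (a - 1) m.+2) - H S).
Proof.
rewrite (bigD1 (a + m.+1%:R)) // (bigD1 a) /=; last first.
  by rewrite (eq_offset a) offset_id offset_natr modn_small.
rewrite shrink_right_prob shrink_right_copy grow_left_prob grow_left_copy.
rewrite big1 ?addr0 // => u /andP[].
rewrite !(eq_offset a) offset_id offset_natr modn_small // => u_neq1 u_neq2.
rewrite copy_type_id ?subrr ?mulr0 // !inE offset_subr1 ?lt0n //.
by apply/idP/idP; lia.
Qed.

Lemma arc_step (H : {set V} -> R) :
  \sum_u \sum_(v | cycle_adj u v) P S u v * H (copy_type S u v) =
  H S + grow_prob m.+1 * (H (arc a m.+2) - H S + (H (arc (a - 1) m.+2) - H S))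
      + shrink_prob m.+1 * (H (arc a m) - H S + (H (arc (a + 1) m) - H S)).
Proof.
have -> : \sum_u \sum_(v | cycle_adj u v) P S u v * H (copy_type S u v) =
    \sum_u \sum_(v | cycle_adj u v) P S u v * H S +
    \sum_u \sum_(v | cycle_adj u v) P S u v * (H (copy_type S u v) - H S).
  rewrite -big_split; apply: eq_bigr => u _.
  by rewrite -big_split; apply: eq_bigr => v _ /=; ring.
under eq_bigr => u _ do rewrite -big_distrl /=.
rewrite -big_distrl /= (sum_pair_prob _ r_gt0 cycle_adj_sym cycle_adj_nonisolated a) mul1r.
under eq_bigr => u _ do rewrite sum_cycle_adj.
by rewrite big_split /= sum_succ_moves sum_pred_moves; ring.
Qed.

End Boundary.

Local Notation absorb t S := (tstep_prob (@cycle_adj N) r delta t S [set: V]).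

Lemma absorb_prob_arc t a k : (k <= N)%N -> absorb t (arc a k) = absorb t (arc 0 k).
Proof.
elim: t a k => [|t IHt] a k k_le; first by rewrite /= !arc_eqT.
case: k k_le => [|m] m_le; first by rewrite !arc0.
have m_cases : (m.+1 < N)%N \/ m.+1 = N by lia.
case: m_cases => [m_lt|->]; last by rewrite !arcN.
have [m1_le m_le'] : (m.+1 <= N)%N /\ (m <= N)%N by lia.
rewrite !tstep_probS (arc_step a m_lt (fun S => absorb t S)).
rewrite (arc_step 0 m_lt (fun S => absorb t S)).
by rewrite !(IHt a) // !(IHt (a - 1)) // !(IHt (a + 1)) // !(IHt (0 - 1)) // !(IHt (0 + 1)).
Qed.

Local Notation fix_arc k := (fix_prob (@cycle_adj N) r delta (arc 0 k)).

Lemma absorb_prob_arc_cvg k : (absorb t (arc 0 k) @[t --> \oo] --> fix_arc k)%classic.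
Proof.
exact: (absorb_prob_cvg r_gt0 delta_ge0 delta_le1 cycle_adj_sym cycle_adj_nonisolated 0).
Qed.

Lemma fix_prob_arc a k :
  (k <= N)%N -> fix_prob (@cycle_adj N) r delta (arc a k) = fix_arc k.
Proof.
move=> k_le; apply: cvg_lim => //; under eq_fun do rewrite absorb_prob_arc //.
exact: absorb_prob_arc_cvg.
Qed.

Lemma fix_prob_arc0 : fix_arc 0 = 0.
Proof.
apply: cvg_lim => //; rewrite arc0; under eq_fun do rewrite (absorb_prob0 _ _ _ 0).
exact: cvg_cst.
Qed.

Lemma fix_prob_arcN : fix_arc N = 1.
Proof.
apply: cvg_lim => //; rewrite arcN.
under eq_fun do rewrite (absorb_probT _ r_gt0 cycle_adj_sym cycle_adj_nonisolated 0).
exact: cvg_cst.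
Qed.

Lemma fix_prob_arc_balance k : (0 < k < N)%N ->
  grow_prob k * (fix_arc k.+1 - fix_arc k) = shrink_prob k * (fix_arc k - fix_arc k.-1).
Proof.
case: k => [//|m] /= m_lt.
have m_le : (m <= N)%N by lia.
have absorb_arcS t : absorb t.+1 (arc 0 m.+1) =
    absorb t (arc 0 m.+1)
    + 2 * grow_prob m.+1 * (absorb t (arc 0 m.+2) - absorb t (arc 0 m.+1))
    + 2 * shrink_prob m.+1 * (absorb t (arc 0 m) - absorb t (arc 0 m.+1)).
  rewrite tstep_probS (arc_step 0 m_lt (fun S => absorb t S)).
  by rewrite (absorb_prob_arc t (0 - 1)) // (absorb_prob_arc t (0 + 1)) //; ring.
have lim_shift : (absorb t.+1 (arc 0 m.+1) @[t --> \oo] --> fix_arc m.+1)%classic.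
  by rewrite (cvg_shiftS (fun t => absorb t (arc 0 m.+1))); exact: absorb_prob_arc_cvg.
have lim_step : (absorb t.+1 (arc 0 m.+1) @[t --> \oo] -->
    fix_arc m.+1 + 2 * grow_prob m.+1 * (fix_arc m.+2 - fix_arc m.+1)
    + 2 * shrink_prob m.+1 * (fix_arc m - fix_arc m.+1))%classic.
  under eq_fun do rewrite absorb_arcS.
  by apply: cvgD; [apply: cvgD|]; try apply: cvgMl_tmp; try apply: cvgB;
    exact: absorb_prob_arc_cvg.
suff : fix_arc m.+1 = fix_arc m.+1 + 2 * grow_prob m.+1 * (fix_arc m.+2 - fix_arc m.+1)
                      + 2 * shrink_prob m.+1 * (fix_arc m - fix_arc m.+1) by lra.
exact: norm_cvg_unique lim_shift lim_step.
Qed.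

Lemma grow_prob_gt0 k : (k <= N)%N -> 0 < grow_prob k.
Proof.
move=> k_le; have F_gt0 := F_k_gt0 r_gt0 (isT : (0 < N)%N) k_le.
have other_gt0 : 0 < (if k == N.-1 then r else 1) by case: ifP.
have db_gt0 : 0 < 1 / N%:R * (r / ((if k == N.-1 then r else 1) + r)).
  by rewrite mulr_gt0 ?divr_gt0 ?addr_gt0 ?ltr0n.
have bd_gt0 : 0 < r / F_k N r k * (1 / 2) by rewrite mulr_gt0 ?divr_gt0.
rewrite /grow_prob -[delta * _ * _]mulrA -[(1 - delta) * _ * _]mulrA.
case: (ltrP delta 1) => [delta_lt1|delta_ge1].
  by apply: ltr_wpDl; [rewrite mulr_ge0 // ltW | rewrite mulr_gt0 // subr_gt0].
rewrite (@le_anti _ _ delta 1) ?delta_le1 // subrr mul0r addr0.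
exact: mulr_gt0 ltr01 db_gt0.
Qed.

Lemma gamma_kE k : (0 < k < N)%N -> gamma_k N r delta k = shrink_prob k / grow_prob k.
Proof.
case/andP => k_gt0 k_lt.
have F_neq0 j : (j <= N)%N -> F_k N r j != 0.
  by move=> j_le; rewrite lt0r_neq0 // F_k_gt0.
have N_neq0 : 3 + n%:R != 0 :> R.
  by rewrite lt0r_neq0 // ltr_wpDr ?ler0n.
have r_sum_neq0 : [/\ 1 + r != 0, r + 1 != 0 & r + r != 0].
  by split; rewrite lt0r_neq0 // ?addr_gt0.
(* gamma_k is shrink_prob k / grow_prob k with both terms doubled. *)
have halve (x y : R) : (2 * x) / (2 * y) = x / y by rewrite invfM mulrACA mulfV ?mul1r.
case: r_sum_neq0 => r1_neq0 r1_neq0' rr_neq0.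
rewrite -[RHS]halve /gamma_k /grow_prob /shrink_prob.
have [-> | k_neq1] := eqVneq k 1%N; last have [-> | k_neqN] := eqVneq k N.-1.
all: rewrite /=; congr (_ / _); field.
all: by rewrite ?F_neq0 ?N_neq0 ?r1_neq0 ?r1_neq0' ?rr_neq0 // ltnW.
Qed.

End ArcDynamics.
End Cycle.

Theorem mainTheorem5 (R : realType) (N : nat) (r delta : R) :
  (3 <= N)%N -> 0 < r -> 0 <= delta -> delta <= 1 ->
  fix_prob_avg (@cycle_adj N) r delta =
  1 / (1 + \sum_(1 <= j < N) \prod_(1 <= k < j.+1) gamma_k N r delta k).
Proof.
case: N => [|[|[|n]]] // _ r_gt0 delta_ge0 delta_le1.
rewrite /fix_prob_avg.
under eq_bigr => u _ do rewrite -arc1 (fix_prob_arc r_gt0 delta_ge0 delta_le1) //.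
rewrite sumr_const card_ord div1r -[fix_prob _ _ _ _ *+ _]mulr_natl mulKf ?pnatr_eq0 //.
transitivity (1 / (1 + \sum_(1 <= j < n.+3) \prod_(1 <= k < j.+1)
                          (shrink_prob n r delta k / grow_prob n r delta k))).
  apply: (birth_death_hitting (x := fun k => fix_prob (@cycle_adj n.+3) r delta (arc 0 k))).
  - exact: fix_prob_arc0.
  - exact: fix_prob_arcN.
  - by move=> k /andP[_ k_lt]; rewrite lt0r_neq0 // grow_prob_gt0 // ltnW.
  - exact: fix_prob_arc_balance.
congr (1 / (1 + _)); apply: eq_big_nat => j /andP[_ j_lt].
apply: eq_big_nat => k /andP[k_gt0 k_le].
by rewrite gamma_kE // k_gt0 (leq_trans k_le).
Qed.
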